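(* The class of $\curlyvee$-algebras is a proper quasivariety: it is a quasivariety but not a variety (it is not closed under homomorphic images).
   Context: A left regular band is a set with a binary operation $\sqcup$ satisfying $a\sqcup(b\sqcup c)=(a\sqcup b)\sqcup c$, $a\sqcup a=a$, $a\sqcup b=(a\sqcup b)\sqcup a$. On an algebra with operation $\sqcup$ write $a\lesssim b$ iff $b\sqcup a=b$. A $\curlyvee$-algebra is an algebra $(S,\curlyvee)$ with one binary operation such that, defining $a\sqcup b=a\curlyvee(a\curlyvee b)$ for all $a,b\in S$: $(S,\sqcup)$ is a left regular band; $\curlyvee$ is commutative and idempotent; $(a\curlyvee b)\sqcup(a\sqcup b)=a\sqcup b$; $a\sqcup(b\curlyvee c)=(a\sqcup b)\curlyvee(a\sqcup c)$; and for all $a,b,c,d$, if $d\lesssim a$, $d\lesssim b$, $d\lesssim c$, $d\lesssim a\curlyvee b$ and $d\lesssim b\curlyvee c$ then $d\lesssim a\curlyvee c$. *)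

Definition sqcup {S : Type} (v : S -> S -> S) (a b : S) : S := v a (v a b).

Definition lesssim {S : Type} (op : S -> S -> S) (a b : S) : Prop := op b a = b.

Definition left_regular_band {S : Type} (op : S -> S -> S) : Prop :=
  (forall a b c, op a (op b c) = op (op a b) c) /\
  (forall a, op a a = a) /\
  (forall a b, op a b = op (op a b) a).

Definition vee_algebra (S : Type) (v : S -> S -> S) : Prop :=
  let j := sqcup v in
  left_regular_band j /\
  (forall a b, v a b = v b a) /\
  (forall a, v a a = a) /\
  (forall a b, j (v a b) (j a b) = j a b) /\
  (forall a b c, j a (v b c) = v (j a b) (j a c)) /\
  (forall a b c d,
     lesssim j d a -> lesssim j d b -> lesssim j d c ->
     lesssim j d (v a b) -> lesssim j d (v b c) -> lesssim j d (v a c)).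

Definition is_hom {S T : Type} (opS : S -> S -> S) (opT : T -> T -> T)
  (h : S -> T) : Prop := forall x y, h (opS x y) = opT (h x) (h y).

Definition surjective {S T : Type} (h : S -> T) : Prop := forall t, exists s, h s = t.
Definition injective {S T : Type} (h : S -> T) : Prop := forall x y, h x = h y -> x = y.

(* a filter on an index type I (not required to be proper) *)
Definition is_filter {I : Type} (F : (I -> Prop) -> Prop) : Prop :=
  F (fun _ => True) /\
  (forall X Y : I -> Prop, F X -> (forall i, X i -> Y i) -> F Y) /\
  (forall X Y : I -> Prop, F X -> F Y -> F (fun i => X i /\ Y i)).

Definition alg_class := forall S : Type, (S -> S -> S) -> Prop.

Definition closed_IS (K : alg_class) : Prop :=
  forall (S T : Type) (opS : S -> S -> S) (opT : T -> T -> T) (h : T -> S),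
    is_hom opT opS h -> injective h -> K S opS -> K T opT.

(* closed under isomorphic copies of reduced products (I P_R):
   T with a surjective homomorphism h from the direct product of the A i
   whose kernel is exactly "agreement on an F-large set" *)
Definition closed_IPR (K : alg_class) : Prop :=
  forall (I : Type) (A : I -> Type) (opA : forall i, A i -> A i -> A i)
         (F : (I -> Prop) -> Prop) (T : Type) (opT : T -> T -> T)
         (h : (forall i, A i) -> T),
    is_filter F ->
    (forall i, K (A i) (opA i)) ->
    is_hom (fun f g => fun i => opA i (f i) (g i)) opT h ->
    surjective h ->
    (forall f g, h f = h g <-> F (fun i => f i = g i)) ->
    K T opT.

(* Mal'cev: a class is a quasivariety iff it is closed under I, S and P_R *)
Definition quasivariety (K : alg_class) : Prop := closed_IS K /\ closed_IPR K.

Definition closed_H (K : alg_class) : Prop :=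
  forall (S T : Type) (opS : S -> S -> S) (opT : T -> T -> T) (h : S -> T),
    is_hom opS opT h -> surjective h -> K S opS -> K T opT.


(* All axioms of a ∨-algebra but the last are identities; the last is a
   quasi-identity, i.e. a Horn clause whose premises are equations.
   Identities pass to homomorphic images of products and to subalgebras.  The
   quasi-identity passes to subalgebras because an embedding reflects
   equations, and to reduced products because the filter is closed under
   finite intersections, so the premises hold together on a large set of
   coordinates.  Homomorphic images may break it: collapsing the ideal
   {s0, s1, s4} of a six-element ∨-algebra yields a four-element algebra in
   which it fails. *)

(* The identities are stated up to a relation so that a direct product can
   satisfy them up to pointwise equality, without function extensionality. *)
Definition vee_identities_mod {S : Type} (eqv : S -> S -> Prop)
    (v : S -> S -> S) : Prop :=
  (forall a b c, eqv (sqcup v a (sqcup v b c)) (sqcup v (sqcup v a b) c)) /\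
  (forall a, eqv (sqcup v a a) a) /\
  (forall a b, eqv (sqcup v a b) (sqcup v (sqcup v a b) a)) /\
  (forall a b, eqv (v a b) (v b a)) /\
  (forall a, eqv (v a a) a) /\
  (forall a b, eqv (sqcup v (v a b) (sqcup v a b)) (sqcup v a b)) /\
  (forall a b c, eqv (sqcup v a (v b c)) (v (sqcup v a b) (sqcup v a c))).

Definition vee_quasi_identity {S : Type} (v : S -> S -> S) : Prop :=
  forall a b c d,
    lesssim (sqcup v) d a -> lesssim (sqcup v) d b -> lesssim (sqcup v) d c ->
    lesssim (sqcup v) d (v a b) -> lesssim (sqcup v) d (v b c) ->
    lesssim (sqcup v) d (v a c).

Lemma vee_algebra_iff (S : Type) (v : S -> S -> S) :
  vee_algebra S v <-> vee_identities_mod eq v /\ vee_quasi_identity v.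
Proof.
  unfold vee_algebra, left_regular_band, vee_identities_mod, vee_quasi_identity.
  cbv zeta; tauto.
Qed.

Lemma vee_identities_hom_image (S T : Type) (opS : S -> S -> S)
    (opT : T -> T -> T) (R : S -> S -> Prop) (h : S -> T) :
  is_hom opS opT h -> surjective h -> (forall x y, R x y -> h x = h y) ->
  vee_identities_mod R opS -> vee_identities_mod eq opT.
Proof.
  intros h_hom h_surj h_R; unfold vee_identities_mod, sqcup.
  intros (assoc & idem & regular & comm & videm & absorb & distr).
  repeat split; intros;
    repeat match goal with x : T |- _ => destruct (h_surj x) as [? <-] end;
    rewrite <- !h_hom; apply h_R; auto.
Qed.

Section Homomorphisms.

Variables (S T : Type) (opS : S -> S -> S) (opT : T -> T -> T) (h : S -> T).
Hypothesis h_hom : is_hom opS opT h.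

Lemma hom_sqcup (a b : S) : h (sqcup opS a b) = sqcup opT (h a) (h b).
Proof. unfold sqcup; rewrite !h_hom; reflexivity. Qed.

Lemma hom_lesssim (a b : S) :
  lesssim (sqcup opS) a b -> lesssim (sqcup opT) (h a) (h b).
Proof. unfold lesssim; intro E; rewrite <- hom_sqcup, E; reflexivity. Qed.

Hypothesis h_inj : injective h.

Lemma inj_hom_lesssim (a b : S) :
  lesssim (sqcup opT) (h a) (h b) -> lesssim (sqcup opS) a b.
Proof. unfold lesssim; rewrite <- hom_sqcup; apply h_inj. Qed.

Lemma vee_identities_embedding :
  vee_identities_mod eq opT -> vee_identities_mod eq opS.
Proof.
  unfold vee_identities_mod, sqcup.
  intros (assoc & idem & regular & comm & videm & absorb & distr).
  repeat split; intros; apply h_inj; rewrite !h_hom; auto.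
Qed.

Lemma vee_quasi_identity_embedding :
  vee_quasi_identity opT -> vee_quasi_identity opS.
Proof.
  intros Q a b c d Ha Hb Hc Hab Hbc.
  apply inj_hom_lesssim; rewrite h_hom.
  apply (Q (h a) (h b) (h c)); rewrite <- ?h_hom; apply hom_lesssim; assumption.
Qed.

Lemma vee_algebra_embedding : vee_algebra T opT -> vee_algebra S opS.
Proof.
  intro alg; apply vee_algebra_iff in alg as [Hid Hq].
  apply vee_algebra_iff; split.
  - apply vee_identities_embedding, Hid.
  - apply vee_quasi_identity_embedding, Hq.
Qed.

End Homomorphisms.

Definition prod_op {I : Type} {A : I -> Type} (opA : forall i, A i -> A i -> A i)
    (f g : forall i, A i) : forall i, A i :=
  fun i => opA i (f i) (g i).

Lemma vee_identities_product (I : Type) (A : I -> Type)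
    (opA : forall i, A i -> A i -> A i) :
  (forall i, vee_identities_mod eq (opA i)) ->
  vee_identities_mod (fun f g => forall i, f i = g i) (prod_op opA).
Proof.
  intro K; unfold vee_identities_mod, sqcup, prod_op in *.
  repeat split; intros;
    destruct (K i) as (assoc & idem & regular & comm & videm & absorb & distr);
    auto.
Qed.

Section ReducedProducts.

Variables (I : Type) (A : I -> Type) (opA : forall i, A i -> A i -> A i)
  (F : (I -> Prop) -> Prop) (T : Type) (opT : T -> T -> T)
  (h : (forall i, A i) -> T).
Hypothesis F_filter : is_filter F.
Hypothesis h_hom : is_hom (prod_op opA) opT h.
Hypothesis h_surj : surjective h.
Hypothesis h_ker : forall f g, h f = h g <-> F (fun i => f i = g i).

Lemma pointwise_eq_hom (f g : forall i, A i) :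
  (forall i, f i = g i) -> h f = h g.
Proof.
  destruct F_filter as [F_true [F_mono _]].
  intro E; apply h_ker, (F_mono (fun _ => True)); auto.
Qed.

Lemma reduced_product_lesssim (f g : forall i, A i) :
  lesssim (sqcup opT) (h f) (h g) <->
  F (fun i => lesssim (sqcup (opA i)) (f i) (g i)).
Proof. unfold lesssim; rewrite <- (hom_sqcup _ _ _ _ h h_hom); apply h_ker. Qed.

Lemma vee_quasi_identity_reduced_product :
  (forall i, vee_quasi_identity (opA i)) -> vee_quasi_identity opT.
Proof.
  destruct F_filter as [_ [F_mono F_and]]; intros Q a b c d.
  destruct (h_surj a) as [fa <-], (h_surj b) as [fb <-],
    (h_surj c) as [fc <-], (h_surj d) as [fd <-].
  rewrite <- !h_hom; intros Ha Hb Hc Hab Hbc.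
  apply reduced_product_lesssim in Ha, Hb, Hc, Hab, Hbc.
  apply reduced_product_lesssim.
  apply (F_mono _ _ (F_and _ _ Ha (F_and _ _ Hb (F_and _ _ Hc (F_and _ _ Hab Hbc))))).
  intros i (? & ? & ? & ? & ?); apply (Q i (fa i) (fb i) (fc i)); assumption.
Qed.

Lemma vee_algebra_reduced_product :
  (forall i, vee_algebra (A i) (opA i)) -> vee_algebra T opT.
Proof.
  intro K; apply vee_algebra_iff; split.
  - apply (vee_identities_hom_image _ _ _ _ _ h h_hom h_surj pointwise_eq_hom).
    apply vee_identities_product; intro i; apply vee_algebra_iff, K.
  - apply vee_quasi_identity_reduced_product; intro i; apply vee_algebra_iff, K.
Qed.

End ReducedProducts.

Inductive V6 := s0 | s1 | s2 | s3 | s4 | s5.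

Definition v6 (x y : V6) : V6 :=
  match x, y with
  | s0, s0 => s0 | s0, s1 => s0 | s0, s2 => s0 | s0, s3 => s0 | s0, s4 => s1 | s0, s5 => s1
  | s1, s0 => s0 | s1, s1 => s1 | s1, s2 => s0 | s1, s3 => s1 | s1, s4 => s4 | s1, s5 => s4
  | s2, s0 => s0 | s2, s1 => s0 | s2, s2 => s2 | s2, s3 => s2 | s2, s4 => s1 | s2, s5 => s3
  | s3, s0 => s0 | s3, s1 => s1 | s3, s2 => s2 | s3, s3 => s3 | s3, s4 => s4 | s3, s5 => s5
  | s4, s0 => s1 | s4, s1 => s4 | s4, s2 => s1 | s4, s3 => s4 | s4, s4 => s4 | s4, s5 => s4
  | s5, s0 => s1 | s5, s1 => s4 | s5, s2 => s3 | s5, s3 => s5 | s5, s4 => s4 | s5, s5 => s5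
  end.

Inductive V4 := t0 | t1 | t2 | t3.

Definition v4 (x y : V4) : V4 :=
  match x, y with
  | t0, _ => t0 | _, t0 => t0
  | t1, t1 => t1 | t1, t2 => t1 | t1, t3 => t2
  | t2, t1 => t1 | t2, t2 => t2 | t2, t3 => t3
  | t3, t1 => t2 | t3, t2 => t3 | t3, t3 => t3
  end.

Definition collapse (x : V6) : V4 :=
  match x with s0 | s1 | s4 => t0 | s2 => t1 | s3 => t2 | s5 => t3 end.

Lemma collapse_hom : is_hom v6 v4 collapse.
Proof. intros [] []; reflexivity. Qed.

Lemma collapse_surjective : surjective collapse.
Proof. intros []; [exists s0 | exists s2 | exists s3 | exists s5]; reflexivity. Qed.

Lemma vee_algebra_V6 : vee_algebra V6 v6.
Proof.
  apply vee_algebra_iff; split.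
  - repeat split; intros; repeat match goal with x : V6 |- _ => destruct x end;
      reflexivity.
  - intros [] [] [] []; simpl; intros; try reflexivity; discriminate.
Qed.

(* With d = a = t1, b = t0, c = t3: the absorbing t0 lies above every element,
   but t1 is not below t1 ∨ t3 = t2. *)
Lemma not_vee_algebra_V4 : ~ vee_algebra V4 v4.
Proof.
  intro alg; apply vee_algebra_iff in alg as [_ Q].
  discriminate (Q t1 t0 t3 t1 eq_refl eq_refl eq_refl eq_refl eq_refl).
Qed.

Theorem theorem3p11 :
  quasivariety vee_algebra /\ ~ closed_H vee_algebra.
Proof.
  split; [split |].
  - intros S T opS opT h; apply vee_algebra_embedding.
  - intros I A opA F T opT h F_filter K h_hom h_surj h_ker.
    exact (vee_algebra_reduced_product I A opA F T opT h
             F_filter h_hom h_surj h_ker K).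
  - intro closed; apply not_vee_algebra_V4.
    exact (closed V6 V4 v6 v4 collapse collapse_hom collapse_surjective
             vee_algebra_V6).
Qed.
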